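(* Let $L\colon\mathbb R\times\mathbb R\to\mathbb R$, $(x,\dot x)\mapsto L(x,\dot x)$, be continuously differentiable with $L_x(0,0)=L_{\dot x}(0,0)=0$ and $L(0,\dot x)=0$ for every $\dot x\in\mathbb R$. Consider the problem $$\int_0^1L(x(t),\dot x(t))\,dt\to\min,\quad x(0)=x(1)=0.$$ If the function $\widehat x\equiv0$ delivers a strong local minimum in this problem, then the function $\dot x\mapsto L_x(0,\dot x)$ is linear on $\mathbb R$.
   Context: A strong local minimum means: there is a neighbourhood of $\widehat x$ in the uniform norm on $C([0,1])$ such that the functional at any admissible $x$ (absolutely continuous with $x(0)=x(1)=0$) in that neighbourhood is at least its value at $\widehat x$. *)

From HB Require Import structures.
From mathcomp Require Import all_boot all_order all_algebra.
From mathcomp Require Import all_classical all_reals all_analysis.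
Set Implicit Arguments. Unset Strict Implicit. Unset Printing Implicit Defensive.
Import Order.TTheory GRing.Theory Num.Theory.
Import numFieldNormedType.Exports.
Local Open Scope classical_set_scope.
Local Open Scope ring_scope.

Definition abs_continuous_on {R : realType} (a b : R) (f : R -> R) : Prop :=
  forall e : R, 0 < e -> exists2 d : R, 0 < d &
    forall (n : nat) (u w : 'I_n -> R),
      (forall i, a <= u i /\ u i <= w i /\ w i <= b) ->
      (forall i j, i != j -> w i <= u j \/ w j <= u i) ->
      \sum_(i < n) (w i - u i) < d ->
      \sum_(i < n) `|f (w i) - f (u i)| < e.

Definition ae_derivative_01 {R : realType} (x v : R -> R) : Prop :=
  {ae (@lebesgue_measure R), forall t : R, t \in `[0%R, 1%R] -> is_derive t 1 x (v t)}.

Definition Jfun {R : realType} (L : R -> R -> R) (x v : R -> R) : R :=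
  Rintegral (@lebesgue_measure R) `[0%R, 1%R] (fun t => L (x t) (v t)).

(* Admissible functions: absolutely continuous on [0,1], x(0)=x(1)=0,
   with a.e. derivative v, and t |-> L(x t, v t) Lebesgue integrable on [0,1]
   (so that the functional is defined). *)
Definition admissible {R : realType} (L : R -> R -> R) (x v : R -> R) : Prop :=
  [/\ abs_continuous_on 0 1 x, x 0 = 0, x 1 = 0, ae_derivative_01 x v &
      (@lebesgue_measure R).-integrable `[0%R, 1%R] (fun t => (L (x t) (v t))%:E)].

Definition strong_local_min_zero {R : realType} (L : R -> R -> R) : Prop :=
  exists2 delta : R, 0 < delta &
    forall x v : R -> R, admissible L x v ->
      (forall t : R, t \in `[0%R, 1%R] -> `|x t| < delta) ->
      Jfun L (fun _ => 0) (fun _ => 0) <= Jfun L x v.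

From HB Require Import structures.
From mathcomp Require Import all_boot all_order all_algebra.
From mathcomp Require Import all_classical all_reals all_analysis.
From mathcomp Require Import ring lra.
Import Order.TTheory GRing.Theory Num.Theory.
Import numFieldNormedType.Exports.
Local Open Scope classical_set_scope.
Local Open Scope ring_scope.

(* Compare the zero curve with small tents: x rises with slope p on [0, s]
   and returns to 0 with slope w, of the opposite sign, on [s, s + d].  Such an
   x is Lipschitz, hence admissible, and its sup norm |p| s is as small as we
   like.  Since L(0, .) = 0, expanding L to first order in x gives
     J(x) = (Lx(0, p) / p - Lx(0, w) / w) (p s)^2 / 2 + o(s^2),
   so a strong local minimum at 0 forces Lx(0, w) / w <= Lx(0, p) / p whenever
   p w < 0.  Used in both directions, this says that Lx(0, v) / v takes one
   and the same value for all v <> 0, i.e. v |-> Lx(0, v) is linear. *)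

Section RealFunctions.
Context {R : realType}.
Implicit Types (f : R -> R) (a b c x M : R).

Lemma is_derive_le_tangent {f} {x l eta : R} : is_derive x 1 f l -> 0 < eta ->
  exists2 rho : R, 0 < rho &
    forall z, `|z - x| < rho -> f z <= f x + l * (z - x) + eta * `|z - x|.
Proof.
move=> /is_derive1_caratheodory[g [fE gx_cont gxl]] eta_gt0.
move: gx_cont => /cvgrPdist_lt /(_ eta eta_gt0) /nbhs_normP[rho rho_gt0 g_near].
exists rho => // z zx.
have gz : `|g z - l| < eta by rewrite -gxl distrC; apply: g_near; rewrite /= distrC.
have : (g z - l) * (z - x) <= eta * `|z - x|.
  by rewrite (le_trans (ler_norm _)) // normrM ler_wpM2r // ltW.
by rewrite -(subrK (f x) (f z)) fE addrC; lra.
Qed.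

Lemma derivable_continuous f : (forall x, derivable f x 1) -> continuous f.
Proof. by move=> df x; apply: differentiable_continuous; rewrite -derivable1_diffP. Qed.

Lemma small_scale {a b rho : R} : 0 <= a -> 0 <= b -> 0 < rho ->
  exists2 s : R, 0 < s & a * s < rho /\ s + b * s <= rho.
Proof.
move=> a_ge0 b_ge0 rho_gt0.
pose K := 1 + a + b.
have [aK bK] : a < K /\ 1 + b <= K by rewrite /K; split; lra.
pose s := rho / K; have s_gt0 : 0 < s by rewrite divr_gt0 // (le_lt_trans a_ge0).
have -> : rho = K * s by rewrite /s mulrC divfK // gt_eqF // (le_lt_trans a_ge0).
exists s => //; rewrite (_ : s + b * s = (1 + b) * s); last by ring.
by rewrite ltr_pM2r // ler_pM2r.
Qed.

Lemma gt_nbhs_leF a t : a < t -> \forall y \near t, (y <= a) = false.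
Proof. by move=> /lt_nbhsr; apply: filterS => y; rewrite ltNge => /negbTE. Qed.

Lemma is_derive_affine (al be x : R) : is_derive x 1 (fun t => al + be * t) be.
Proof.
have : is_derive x 1 (fun t => al + be * t) (0 + be * 1) by apply: is_deriveD.
by rewrite add0r mulr1.
Qed.

Lemma affine_continuous (al be : R) : continuous (fun t => al + be * t).
Proof. by apply: derivable_continuous => x; case: (is_derive_affine al be x). Qed.

Lemma lipschitz_glue c f M a b :
  M.-lipschitz_(`[a, c]) f -> M.-lipschitz_(`[c, b]) f -> M.-lipschitz_(`[a, b]) f.
Proof.
have inI (u v z : R) : u <= z -> z <= v -> z \in `[u, v] by move=> uz zv; rewrite in_itv /= uz.
move=> lip_ac lip_cb [x y] [/=]; rewrite !in_itv /= => /andP[ax xb] /andP[ay yb].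
wlog xy : x y ax xb ay yb / x <= y.
  move=> sym; have [|yx] := leP x y; first exact: sym.
  by rewrite distrC [`|x - y|]distrC; apply: sym => //; exact: ltW.
have [yc|cy] := leP y c.
  exact: (lip_ac (x, y) (conj (inI _ _ _ ax (le_trans xy yc)) (inI _ _ _ ay yc))).
have [cx|xc] := leP c x.
  exact: (lip_cb (x, y) (conj (inI _ _ _ cx xb) (inI _ _ _ (le_trans cx xy) yb))).
have ac : a <= c := le_trans ax (ltW xc).
have cb : c <= b := le_trans (ltW cy) yb.
have /= lip_xc := lip_ac (x, c) (conj (inI _ _ _ ax (ltW xc)) (inI _ _ _ ac (lexx c))).
have /= lip_cy := lip_cb (c, y) (conj (inI _ _ _ (lexx c) cb) (inI _ _ _ (ltW cy) yb)).
have -> : `|x - y| = `|x - c| + `|c - y|.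
  by rewrite !ler0_norm ?subr_le0 ?(ltW xc) ?(ltW cy) ?(ltW (lt_trans xc cy)) //; ring.
have -> : f x - f y = (f x - f c) + (f c - f y) by ring.
by rewrite mulrDr (le_trans (ler_normD _ _)) // lerD.
Qed.

Lemma lipschitz_affine (al be : R) f M a b :
  {in `[a, b], f =1 fun t => al + be * t} -> `|be| <= M -> M.-lipschitz_(`[a, b]) f.
Proof.
move=> f_affine beM [x y] [/= ax ay].
rewrite !f_affine ?inE //= opprD addrACA subrr add0r -mulrBr normrM.
by rewrite ler_wpM2r.
Qed.

Lemma lipschitz_abs_continuous f M a b :
  0 <= M -> M.-lipschitz_(`[a, b]) f -> abs_continuous_on a b f.
Proof.
move=> M_ge0 lip e e_gt0; exists (e / (M + 1)); first by rewrite divr_gt0 // ltr_wpDl.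
move=> n u w uw_in _ small.
have lip_i i : `|f (w i) - f (u i)| <= M * (w i - u i).
  have [au [uw wb]] := uw_in i.
  have w_in : w i \in `[a, b] by rewrite in_itv /= wb (le_trans au uw).
  have u_in : u i \in `[a, b] by rewrite in_itv /= au (le_trans uw wb).
  by have /= := lip (w i, u i) (conj w_in u_in); rewrite [`|w i - u i|]ger0_norm ?subr_ge0.
apply: le_lt_trans (ler_sum _ (fun i _ => lip_i i)) _.
rewrite -mulr_sumr.
have sum_ge0 : 0 <= \sum_(i < n) (w i - u i).
  by apply: sumr_ge0 => i _; have [_ [uw _]] := uw_in i; rewrite subr_ge0.
apply: le_lt_trans (_ : (M + 1) * \sum_(i < n) (w i - u i) < e).
  by rewrite ler_wpM2r // lerDl.
by rewrite mulrC -ltr_pdivlMr // ltr_wpDl.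
Qed.

End RealFunctions.

Lemma integrable_setU d (T : measurableType d) (R : realType)
    (mu : {measure set T -> \bar R}) (A B : set T) (f : T -> \bar R) :
  measurable A -> measurable B -> A `&` B = set0 ->
  mu.-integrable A f -> mu.-integrable B f -> mu.-integrable (A `|` B) f.
Proof.
move=> mA mB AB0 /(integrable_mkcond _ mA) fA /(integrable_mkcond _ mB) fB.
apply/(integrable_mkcond _ (measurableU _ _ mA mB)).
suff -> : f \_ (A `|` B) = f \_ A \+ f \_ B by exact: integrableD.
apply/funext => t; rewrite /patch /= in_setU.
have [tA|tA] := boolP (t \in A); have [tB|tB] := boolP (t \in B) => /=.
- have : t \in A `&` B by rewrite in_setI tA tB.
  by rewrite AB0 in_set0.
- by rewrite adde0.
- by rewrite add0e.
- by rewrite adde0.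
Qed.

Section Integrals.
Context {R : realType}.
Notation mu := (@lebesgue_measure R).
Implicit Types (f : R -> R) (a b c : R).

Lemma continuous_itv_integrable a b {f} : continuous f -> mu.-integrable `[a, b] (EFin \o f).
Proof.
move=> f_cont; apply: continuous_compact_integrable; first exact: segment_compact.
exact: continuous_subspaceT.
Qed.

Lemma Rintegral_affine a b (al be : R) : a <= b ->
  \int[mu]_(t in `[a, b]) (al + be * t) = (b - a) * (al + be * (a + b) / 2).
Proof.
rewrite le_eqVlt => /predU1P[<-|ab]; first by rewrite set_itv1 Rintegral_set1 subrr mul0r.
pose F t := al * t + be / 2 * (t * t).
have dF (t : R) : is_derive t 1 F (al + be * t).
  have : is_derive t 1 F (al * 1 + be / 2 * (t * 1 + t * 1)) by apply: is_deriveD.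
  by congr is_derive; field.
have F_cont : continuous F.
  by apply: derivable_continuous => t; case: (dF t).
rewrite /Rintegral (@continuous_FTC2 _ _ F) //=.
- by rewrite /F; field.
- exact/continuous_subspaceT/affine_continuous.
- split.
  + by move=> t _; case: (dF t).
  + exact/cvg_at_right_filter/F_cont.
  + exact/cvg_at_left_filter/F_cont.
- by move=> t _; rewrite derive1E; case: (dF t).
Qed.

Lemma Rintegral_itv_oc_split c a b f : a <= c -> c <= b ->
  mu.-integrable `]a, b] (EFin \o f) ->
  \int[mu]_(t in `]a, b]) f t = \int[mu]_(t in `]a, c]) f t + \int[mu]_(t in `]c, b]) f t.
Proof.
move=> ac cb f_int.
by rewrite -(@Rintegral_itvB _ _ _ _ c f_int) ?bnd_simp // addrC subrK.
Qed.

Lemma Rintegral_itv_oc_le_affine f a b (al be : R) : a <= b ->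
  mu.-integrable `]a, b] (EFin \o f) ->
  (forall t, a < t -> t <= b -> f t <= al + be * t) ->
  \int[mu]_(t in `]a, b]) f t <= (b - a) * (al + be * (a + b) / 2).
Proof.
move=> ab f_int f_le.
have aff_int : mu.-integrable `]a, b] (EFin \o fun t => al + be * t).
  apply: integrableS (continuous_itv_integrable a b (affine_continuous al be)) => //.
  exact: subset_itv_oc_cc.
rewrite -Rintegral_affine // -Rintegral_itv_obnd_cbnd //.
apply: le_Rintegral => // t; rewrite /= in_itv /= => /andP[].
exact: f_le.
Qed.

Lemma integrable_itv_cat (c : R) (a b : itv_bound R) (f : R -> \bar R) :
  (a <= BRight c)%O -> (BRight c <= b)%O ->
  mu.-integrable [set` Interval a (BRight c)] f ->
  mu.-integrable [set` Interval (BRight c) b] f ->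
  mu.-integrable [set` Interval a b] f.
Proof.
move=> ac cb f_ac f_cb; rewrite (itv_bndbnd_setU ac cb).
apply: integrable_setU => //.
apply/seteqP; split => // t [] /=; rewrite !itv_boundlr => /andP[_ tc] /andP[ct _].
by rewrite !bnd_simp in tc ct; move: (lt_le_trans ct tc); rewrite ltxx.
Qed.

End Integrals.

Definition tent {R : realType} (p w s d t : R) : R :=
  if t <= s then p * t else if t <= s + d then w * (t - (s + d)) else 0.

Definition tent_slope {R : realType} (p w s d t : R) : R :=
  if t <= s then p else if t <= s + d then w else 0.

Section Tent.
Context {R : realType} {p w s d : R}.
Hypotheses (s_gt0 : 0 < s) (d_gt0 : 0 < d) (tent_closes : p * s + w * d = 0).
Local Notation x := (tent p w s d).
Local Notation x' := (tent_slope p w s d).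

Let s_lt_sd : s < s + d. Proof. by rewrite ltrDl. Qed.

Lemma tent0 : x 0 = 0.
Proof. by rewrite /tent ltW // mulr0. Qed.

Lemma tent_eq0 t : s + d <= t -> x t = 0.
Proof.
move=> sd_t; rewrite /tent leNgt (lt_le_trans s_lt_sd sd_t) /=.
case: ifP => // t_sd.
have -> : t = s + d by apply/le_anti; rewrite t_sd sd_t.
by rewrite subrr mulr0.
Qed.

Lemma tent_descent t : s <= t -> t <= s + d -> x t = w * (t - (s + d)).
Proof.
rewrite /tent le_eqVlt => /predU1P[<- _|st tsd]; last by rewrite leNgt st tsd.
by rewrite lexx; apply/eqP; rewrite -subr_eq0; apply/eqP; rewrite -tent_closes; ring.
Qed.

Lemma tent_peak : `|w| * d = `|p| * s.
Proof.
have : w * d = - (p * s) by apply/eqP; rewrite -addr_eq0 addrC tent_closes.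
by move=> /(congr1 Num.norm); rewrite normrN !normrM (gtr0_norm d_gt0) (gtr0_norm s_gt0).
Qed.

Lemma tent_norm_le t : 0 <= t -> `|x t| <= `|p| * s.
Proof.
move=> t_ge0; have [ts|st] := leP t s.
  by rewrite /tent ts normrM (ger0_norm t_ge0) ler_wpM2l.
have [tsd|sdt] := leP t (s + d); last by rewrite tent_eq0 ?normr0 ?mulr_ge0 // ltW.
rewrite tent_descent ?(ltW st) // normrM -tent_peak distrC.
by rewrite [`|_ - t|]ger0_norm ?subr_ge0 // ler_wpM2l //; lra.
Qed.

Lemma tent_lipschitz : (`|p| + `|w|).-lipschitz_(`[0, 1]) x.
Proof.
apply: (lipschitz_glue s).
  apply: (lipschitz_affine 0 p); last by rewrite lerDl.
  by move=> t; rewrite in_itv /= => /andP[_ ts]; rewrite /tent ts add0r.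
apply: (lipschitz_glue (s + d)).
  apply: (lipschitz_affine (- (w * (s + d))) w); last by rewrite lerDr.
  move=> t; rewrite in_itv /= => /andP[st tsd]; rewrite tent_descent //; ring.
apply: (lipschitz_affine 0 0); last by rewrite normr0 addr_ge0.
by move=> t; rewrite in_itv /= => /andP[sdt _]; rewrite tent_eq0 // mul0r addr0.
Qed.

Lemma tent_abs_continuous : abs_continuous_on 0 1 x.
Proof. by apply: lipschitz_abs_continuous tent_lipschitz; rewrite addr_ge0. Qed.

Lemma tent_is_derive t : t != s -> t != s + d -> is_derive t 1 x (x' t).
Proof.
move=> ts tsd; rewrite /tent_slope /tent.
have [lt_ts|gt_ts] := ltP t s.
  rewrite ltW //; apply: near_eq_is_derive (is_derive_affine 0 p t).
  by near=> y; rewrite add0r ifT //; near: y; exact: lt_le_nbhsl.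
have {}gt_ts : s < t by rewrite lt_neqAle eq_sym ts.
rewrite leNgt gt_ts /=.
have [lt_tsd|gt_tsd] := ltP t (s + d).
  rewrite ltW //; apply: near_eq_is_derive (is_derive_affine (- (w * (s + d))) w t).
  near=> y; rewrite ifF ?ifT; first ring.
    by near: y; exact: lt_le_nbhsl.
  by near: y; exact: gt_nbhs_leF.
have {}gt_tsd : s + d < t by rewrite lt_neqAle eq_sym tsd.
rewrite leNgt gt_tsd; apply: near_eq_is_derive (is_derive_affine 0 0 t).
near=> y; rewrite !ifF ?mul0r ?addr0 //.
  by near: y; exact: gt_nbhs_leF.
by near: y; apply: gt_nbhs_leF; exact: lt_trans gt_tsd.
Unshelve. all: by end_near.
Qed.

Lemma tent_ae_derivative : ae_derivative_01 x x'.
Proof.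
have kinks_null : (@lebesgue_measure R).-negligible ([set s] `|` [set s + d]).
  by apply: negligibleU; apply/negligibleP => //; exact: lebesgue_measure_set1.
rewrite /ae_derivative_01 nearE; apply: negligibleS kinks_null => t /= not_derive.
apply: contrapT => not_kink; apply: not_derive => _.
by apply: tent_is_derive; apply/eqP => t_kink; apply: not_kink; [left | right].
Qed.

Hypothesis sd_le1 : s + d <= 1.
Notation mu := (@lebesgue_measure R).

Lemma tent_integrable {L : R -> R -> R} :
  (forall v, continuous (fun z => L z v)) -> L 0 0 = 0 ->
  mu.-integrable `[0, 1] (fun t => (L (x t) (x' t))%:E).
Proof.
move=> L_cont L00.
have L_affine (al be v : R) : continuous (fun t : R => L (al + be * t) v).
  move=> t; apply: (@continuous_comp _ _ _ (fun t => al + be * t) (L^~ v)).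
    exact: affine_continuous.
  exact: L_cont.
apply: (integrable_itv_cat s); rewrite ?bnd_simp ?(ltW s_gt0) //; first 2 last.
- apply: (integrable_itv_cat (s + d)); rewrite ?bnd_simp ?lerDl ?(ltW d_gt0) //.
    have G_int := continuous_itv_integrable s (s + d) (L_affine (- (w * (s + d))) w w).
    apply: (eq_integrable _ _ _ _ (integrableS _ _ _ G_int)) => //;
      last exact: subset_itv_oc_cc.
    move=> t; rewrite inE /= in_itv /= => /andP[st tsd].
    by rewrite /tent_slope /tent leNgt st tsd; congr (L _ _)%:E; ring.
  apply: (eq_integrable _ _ _ _ (integrable0 _ _)) => //.
  move=> t; rewrite inE /= in_itv /= => /andP[sdt _].
  by rewrite tent_eq0 ?(ltW sdt) // /tent_slope leNgt (lt_trans s_lt_sd sdt) leNgt sdt L00.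
- exact: le_trans (ltW s_lt_sd) sd_le1.
apply: (eq_integrable _ _ _ _ (continuous_itv_integrable 0 s (L_affine 0 p p))) => //.
move=> t; rewrite inE /= in_itv /= => /andP[_ ts].
by rewrite /tent_slope /tent ts add0r.
Qed.

Lemma tent_Jfun_le {L : R -> R -> R} {c1 c2 : R} :
  (forall v, continuous (fun z => L z v)) -> L 0 0 = 0 ->
  (forall t, 0 < t -> t <= s -> L (p * t) p <= c1 * t) ->
  (forall t, s < t -> t <= s + d -> L (w * (t - (s + d))) w <= c2 * (s + d - t)) ->
  Jfun L x x' <= c1 * s ^+ 2 / 2 + c2 * d ^+ 2 / 2.
Proof.
move=> L_cont L00 L_ascent L_descent.
set F := fun t => L (x t) (x' t).
have F_int : mu.-integrable `]0, 1] (EFin \o F).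
  apply: (integrableS _ _ _ (tent_integrable L_cont L00)) => //; exact: subset_itv_oc_cc.
have s_le1 : s <= 1 := le_trans (ltW s_lt_sd) sd_le1.
have F_int_s1 : mu.-integrable `]s, 1] (EFin \o F).
  by apply: integrableS F_int => //; apply: subset_itvr; rewrite bnd_simp ltW.
rewrite /Jfun -/F -Rintegral_itv_obnd_cbnd // (Rintegral_itv_oc_split s) ?(ltW s_gt0) //.
rewrite (Rintegral_itv_oc_split (s + d) s) ?(ltW s_lt_sd) //.
have ascent : \int[mu]_(t in `]0, s]) F t <= (s - 0) * (0 + c1 * (0 + s) / 2).
  apply: Rintegral_itv_oc_le_affine; first exact: ltW.
    by apply: integrableS F_int => //; apply: subset_itvl; rewrite bnd_simp.
  by move=> t t_gt0 ts; rewrite /F /tent /tent_slope ts add0r; exact: L_ascent.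
have descent : \int[mu]_(t in `]s, s + d]) F t <=
    (s + d - s) * (c2 * (s + d) + - c2 * (s + (s + d)) / 2).
  apply: Rintegral_itv_oc_le_affine; first exact: ltW.
    by apply: integrableS F_int_s1 => //; apply: subset_itvl; rewrite bnd_simp.
  move=> t st tsd; rewrite /F tent_descent ?(ltW st) //.
  rewrite /tent_slope (leNgt t s) st tsd /=.
  by rewrite (_ : c2 * (s + d) + - c2 * t = c2 * (s + d - t)) ?L_descent //; ring.
have flat : \int[mu]_(t in `]s + d, 1]) F t <= (1 - (s + d)) * (0 + 0 * (s + d + 1) / 2).
  apply: Rintegral_itv_oc_le_affine => //.
    by apply: integrableS F_int_s1 => //; apply: subset_itvr; rewrite bnd_simp ltW.
  move=> t sdt _; rewrite /F tent_eq0 ?(ltW sdt) // /tent_slope.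
  by rewrite (leNgt t s) (lt_trans s_lt_sd sdt) (leNgt t (s + d)) sdt L00 mul0r addr0.
apply: le_trans (lerD ascent (lerD descent flat)) _.
by rewrite le_eqVlt; apply/predU1P; left; field.
Qed.

Lemma tent_Jfun_le_tangent {L : R -> R -> R} {lp lw eta rho : R} :
  (forall v, continuous (fun z => L z v)) -> L 0 0 = 0 -> `|p| * s < rho ->
  (forall z, `|z| < rho -> L z p <= lp * z + eta * `|z|) ->
  (forall z, `|z| < rho -> L z w <= lw * z + eta * `|z|) ->
  Jfun L x x' <= (p * lp + eta * `|p|) * s ^+ 2 / 2 + (- w * lw + eta * `|w|) * d ^+ 2 / 2.
Proof.
move=> L_cont L00 ps_lt_rho L_p L_w.
have x_small t : 0 <= t -> `|x t| < rho.
  by move=> t_ge0; apply: le_lt_trans (tent_norm_le t t_ge0) ps_lt_rho.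
apply: tent_Jfun_le => // t.
  move=> t_gt0 ts; have := x_small t (ltW t_gt0); rewrite /tent ts => /L_p /le_trans.
  by apply; rewrite normrM (gtr0_norm t_gt0); lra.
move=> st tsd; have := x_small t (ltW (lt_trans s_gt0 st)).
rewrite tent_descent ?(ltW st) // => /L_w /le_trans; apply.
by rewrite normrM distrC (@ger0_norm _ (s + d - t)) ?subr_ge0 //; lra.
Qed.

Lemma tent_admissible {L : R -> R -> R} :
  (forall v, continuous (fun z => L z v)) -> L 0 0 = 0 -> admissible L x x'.
Proof.
move=> L_cont L00; split.
- exact: tent_abs_continuous.
- exact: tent0.
- exact: tent_eq0.
- exact: tent_ae_derivative.
- exact: tent_integrable.
Qed.

End Tent.

Lemma small_admissible_Jfun_lt0 {R : realType} {L Lx : R -> R -> R} {p w delta : R} :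
  (forall a b : R, is_derive a 1 (fun y => L y b) (Lx a b)) -> (forall v : R, L 0 v = 0) ->
  p * w < 0 -> Lx 0 p / p < Lx 0 w / w -> 0 < delta -> exists x v : R -> R,
    [/\ admissible L x v, forall t, t \in `[0, 1] -> `|x t| < delta & Jfun L x v < 0].
Proof.
move=> L_derive L0 pw_lt0 slopes_lt delta_gt0.
have /andP[p_neq0 w_neq0] : (p != 0) && (w != 0) by rewrite -negb_or -mulf_eq0 lt_eqF.
have L_cont v : continuous (fun z => L z v).
  by apply: derivable_continuous => z; case: (L_derive z v).
pose k := - p / w.
have k_gt0 : 0 < k.
  have -> : k = - (p * w) / w ^+ 2 by rewrite /k; field.
  by rewrite divr_gt0 ?oppr_gt0 // exprn_even_gt0.
(* the error terms of the tangent bounds then cost half of the first-order gain *)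
pose eta := (Lx 0 w / w - Lx 0 p / p) * p ^+ 2 / (2 * (`|p| + `|w| * k ^+ 2)).
have eta_gt0 : 0 < eta.
  apply: divr_gt0; first by rewrite mulr_gt0 ?subr_gt0 // exprn_even_gt0.
  by rewrite mulr_gt0 // ltr_pwDl ?normr_gt0 // mulr_ge0 // exprn_ge0 // ltW.
have tangent v : exists2 rho : R, 0 < rho &
    forall z, `|z| < rho -> L z v <= Lx 0 v * z + eta * `|z|.
  have [rho rho_gt0 L_le] := is_derive_le_tangent (L_derive 0 v) eta_gt0.
  by exists rho => // z; move: (L_le z); rewrite !subr0 L0 add0r.
have [rho1 rho1_gt0 L_p] := tangent p.
have [rho2 rho2_gt0 L_w] := tangent w.
pose rho := Num.min (Num.min rho1 rho2) (Num.min delta 1).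
have rho_gt0 : 0 < rho by rewrite !lt_min rho1_gt0 rho2_gt0 delta_gt0 ltr01.
have [s s_gt0 [ps_lt_rho sks_le_rho]] := small_scale (normr_ge0 p) (ltW k_gt0) rho_gt0.
pose d := k * s.
have d_gt0 : 0 < d by rewrite mulr_gt0.
have closes : p * s + w * d = 0 by rewrite /d /k; field.
have sd_le1 : s + d <= 1.
  by apply: le_trans sks_le_rho _; rewrite !ge_min lexx !orbT.
exists (tent p w s d), (tent_slope p w s d); split.
- exact: tent_admissible.
- move=> t; rewrite in_itv /= => /andP[t_ge0 _].
  apply: le_lt_trans (tent_norm_le s_gt0 d_gt0 closes t t_ge0) _.
  by apply: lt_le_trans ps_lt_rho _; rewrite !ge_min lexx !orbT.
have rho_le1 : rho <= rho1 by rewrite !ge_min lexx.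
have rho_le2 : rho <= rho2 by rewrite !ge_min lexx orbT.
apply: le_lt_trans (tent_Jfun_le_tangent s_gt0 d_gt0 closes sd_le1 L_cont (L0 0) ps_lt_rho
  (fun z zr => L_p z (lt_le_trans zr rho_le1)) (fun z zr => L_w z (lt_le_trans zr rho_le2))) _.
have -> : (p * Lx 0 p + eta * `|p|) * s ^+ 2 / 2 + (- w * Lx 0 w + eta * `|w|) * d ^+ 2 / 2 =
    (Lx 0 p / p - Lx 0 w / w) * (p * s) ^+ 2 / 4.
  rewrite /d /eta /k; field.
  by rewrite w_neq0 p_neq0 gt_eqF // addr_gt0 // mulr_gt0 ?normr_gt0 ?exprn_even_gt0 ?oppr_eq0.
by rewrite -mulrA pmulr_llt0 ?subr_lt0 // divr_gt0 // exprn_even_gt0 // mulf_neq0 // gt_eqF.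
Qed.

Lemma strong_local_min_slope_le {R : realType} {L Lx : R -> R -> R} :
  (forall a b : R, is_derive a 1 (fun y => L y b) (Lx a b)) ->
  (forall v : R, L 0 v = 0) -> strong_local_min_zero L ->
  forall p w : R, p * w < 0 -> Lx 0 w / w <= Lx 0 p / p.
Proof.
move=> L_derive L0 [delta delta_gt0 J_min] p w pw_lt0.
rewrite leNgt; apply/negP => slopes_lt.
have [x [v [adm x_small J_lt0]]] :=
  small_admissible_Jfun_lt0 L_derive L0 pw_lt0 slopes_lt delta_gt0.
have J0 : Jfun L (fun=> 0) (fun=> 0) = 0 by rewrite /Jfun L0 Rintegral_cst // mul0r.
by move: (J_min x v adm x_small); rewrite J0 leNgt J_lt0.
Qed.

Theorem mainTheorem3 (R : realType) (L Lx Lv : R -> R -> R) :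
  (* L is C^1 on R x R: partial derivatives Lx, Lv exist everywhere and are
     jointly continuous *)
  (forall a b : R, is_derive a 1 (fun y => L y b) (Lx a b)) ->
  (forall a b : R, is_derive b 1 (fun z => L a z) (Lv a b)) ->
  continuous (fun p : R * R => Lx p.1 p.2) ->
  continuous (fun p : R * R => Lv p.1 p.2) ->
  Lx 0 0 = 0 -> Lv 0 0 = 0 ->
  (forall w : R, L 0 w = 0) ->
  strong_local_min_zero L ->
  exists c : R, forall w : R, Lx 0 w = c * w.
Proof.
(* only the differentiability of L in its first argument is needed *)
move=> L_derive _ _ _ Lx00 _ L0 J_min.
have slope_eq p w : p * w < 0 -> Lx 0 p / p = Lx 0 w / w.
  move=> pw_lt0; apply/le_anti.
  by rewrite !(strong_local_min_slope_le L_derive L0 J_min) // mulrC.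
exists (Lx 0 1) => w.
have [w_lt0|w_gt0|->] := ltgtP w 0; last by rewrite Lx00 mulr0.
- by rewrite -[Lx 0 1]divr1 (slope_eq 1 w) ?mul1r // divfK // lt_eqF.
- rewrite -[Lx 0 1]divr1 (slope_eq 1 (-1)) ?mulN1r ?oppr_lt0 //.
  by rewrite -(slope_eq w (-1)) ?mulrN1 ?oppr_lt0 // divfK // gt_eqF.
Qed.
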